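(* Let $U$ be a countably infinite universe, $\mathcal{C}=(L_1,L_2,\ldots)$ a countably infinite collection of languages over $U$, and let $m^\star_n(L_j)$ be computed by the Noisy Procedure in the context. Suppose that for every $t\in\mathbb{N}$ the set $\{(n',j): m^\star_{n'}(L_j)+1\le t\}$ is finite. Then there exists an algorithm that noisily non-uniformly generates from $\mathcal{C}$ with generation times forming a Pareto-optimal family.
   Context: A language is an infinite subset of $U$; a collection is a sequence of languages (repetitions allowed, entries distinguished by index). For a language $L$ and integer $n\ge0$, an enumeration of $L$ at noise level $n$ is a sequence $x_1,x_2,\ldots$ of elements of $U$ such that every $x\in L$ equals some $x_t$ and $\sum_{t\ge1}\mathbf{1}[x_t\notin L]\le n$. A generating algorithm at each time $t\ge1$ receives $x_1,\ldots,x_t$ and outputs $z_t\in U$; $S_t$ is the set of distinct strings among $x_1,\ldots,x_t$. For a set $T$, language $L$ and integer $a\ge0$, $T$ is $a$-contained in $L$ if $\sum_{x\in T}\mathbf{1}[x\notin L]\le a$. An algorithm noisily non-uniformly generates from $\mathcal{C}$ with (finite) generation times $t_n(L_i)$ if for all $n\ge0$, $i\ge1$ and every enumeration of $L_i$ at noise level $n$, $z_t\in L_i\setminus S_t$ whenever $|S_t|\ge t_n(L_i)$; for an algorithm $\mathcal{G}$, $t_{n,\mathcal{G}}(L_i)$ is the least such value ($\infty$ if none). A family $(t_n(L_i))_{n\ge0,i\ge1}$ is Pareto-optimal if every algorithm $\mathcal{G}$ that noisily non-uniformly generates from $\mathcal{C}$ and satisfies $t_{n,\mathcal{G}}(L_i)<t_n(L_i)$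 for some pair $(n,i)$ also satisfies $t_{n',\mathcal{G}}(L_j)>t_{n'}(L_j)$ for some other pair $(n',j)$. Diagonal order: pairs $(n,i)$ ordered as $(0,1),(1,1),(0,2),(2,1),(1,2),(0,3),\ldots$, i.e. for $n'=0,1,2,\ldots$ and $h=0,\ldots,n'$ the pair $(n'-h,h+1)$. Each pair $(a,b)$ has an entry $L_{a,b}$, a copy of $L_b$ labelled $(a,b)$. Noisy Procedure. Set $\mathcal{C}'_0=()$. For $l=1,2,\ldots$, let $(n,i)$ be the $l$-th pair; append $L_{n,i}$ to the end of $\mathcal{C}'_{l-1}$ to get $\mathcal{C}'_l=(L'_1,\ldots,L'_l)$, set $j=l$. Repeat: (A) let $T$ be a finite subset of $U$ of largest size for which there is a subcollection $\mathcal{D}$ of the entries $(L'_1,\ldots,L'_j)$ including $L'_j$, such that $T$ is $a$-contained in $L_b$ for every entry $L_{a,b}\in\mathcal{D}$ and $\bigcap_{L_{a,b}\in\mathcal{D}}L_b$ is finite; $m_{\mathrm{chk}}=|T|$ ($0$ if no such $\mathcal{D}$ exists). (B) If $j\le1$ or $m_{\mathrm{chk}}>m^\star_a(L_b)$ where $L'_{j-1}=L_{a,b}$, stop. (C) Otherwise swap positions $j-1$, $j$, set $j\leftarrow j-1$, return to (A). On stopping, set $m^\star_n(L_i)=m_{\mathrm{chk}}$. *)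

From Stdlib Require Import ClassicalEpsilon.
From mathcomp Require Import all_boot.

Set Implicit Arguments.
Unset Strict Implicit.
Unset Printing Implicit Defensive.

(* Conventions: languages are predicates U -> Prop; a collection is a sequence
   C : nat -> (U -> Prop), with C i (0-indexed) standing for the paper's L_{i+1}.
   Enumerations x : nat -> U are 0-indexed: x k is the paper's x_{k+1}; the
   paper's prefix x_1..x_t is [seq x k | k <- iota 0 t] = mkseq x t. *)

Section Defs.
Variable U : countType.

Definition infinite_lang (L : U -> Prop) : Prop :=
  forall s : seq U, exists x, L x /\ x \notin s.

(* sum_{t} 1[x_t \notin L] <= n, phrased with distinct indices *)
Definition noise_le (L : U -> Prop) (n : nat) (x : nat -> U) : Prop :=
  forall s : seq nat, uniq s -> (forall t, t \in s -> ~ L (x t)) -> size s <= n.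

Definition enumeration (L : U -> Prop) (n : nat) (x : nat -> U) : Prop :=
  (forall y, L y -> exists t, x t = y) /\ noise_le L n x.

Definition prefix (x : nat -> U) (t : nat) : seq U := mkseq x t.

Definition algorithm := seq U -> U.

Definition works_at (C : nat -> U -> Prop) (G : algorithm) (n i m : nat) : Prop :=
  forall x, enumeration (C i) n x ->
  forall t, 1 <= t -> m <= size (undup (prefix x t)) ->
    C i (G (prefix x t)) /\ G (prefix x t) \notin prefix x t.

Definition generates_with (C : nat -> U -> Prop) (G : algorithm)
  (tt : nat -> nat -> nat) : Prop :=
  forall n i, works_at C G n i (tt n i).

Definition generates (C : nat -> U -> Prop) (G : algorithm) : Prop :=
  exists tt, generates_with C G tt.

Definition least_time (C : nat -> U -> Prop) (G : algorithm) (n i m : nat) : Prop :=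
  works_at C G n i m /\ forall k, works_at C G n i k -> m <= k.

(* Pareto-optimality of the family tt.  For an algorithm G that generates,
   every t_{n,G}(L_i) is finite, hence given by least_time. *)
Definition pareto_optimal (C : nat -> U -> Prop) (tt : nat -> nat -> nat) : Prop :=
  forall G : algorithm, generates C G ->
  forall n i m, least_time C G n i m -> m < tt n i ->
  exists n' j m', (n', j) <> (n, i) /\ least_time C G n' j m' /\ tt n' j < m'.

Definition a_contained (T : seq U) (L : U -> Prop) (a : nat) : Prop :=
  forall s : seq U, uniq s -> {subset s <= T} -> (forall y, y \in s -> ~ L y) ->
    size s <= a.

(* Candidate sizes in step (A): pre = (L'_1, ..., L'_j) as labels (a,b),
   the entry L'_j being the last one.  A subcollection D is a set of entries
   of pre containing L'_j. *)
Definition chk_size (C : nat -> U -> Prop) (pre : seq (nat * nat)) (k : nat) : Prop :=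
  k = 0 \/
  exists (T : seq U) (D : seq (nat * nat)),
    [/\ uniq T, size T = k,
        {subset D <= pre} /\ last (0, 0) pre \in D,
        (forall ab, ab \in D -> a_contained T (C ab.2) ab.1) &
        (exists F : seq U, forall y, (forall ab, ab \in D -> C ab.2 y) -> y \in F)].

Definition mchk (C : nat -> U -> Prop) (pre : seq (nat * nat)) : nat :=
  epsilon (inhabits 0%N)
    (fun m => chk_size C pre m /\ forall k, chk_size C pre k -> k <= m).

Definition swap_at (s : seq (nat * nat)) (k : nat) : seq (nat * nat) :=
  set_nth (0, 0) (set_nth (0, 0) s k (nth (0, 0) s k.+1)) k.+1 (nth (0, 0) s k).

(* Steps (A)-(C) starting from position j (1-indexed) in list s, with
   ms the already computed values of m^star.  Returns the final list and the
   value m_chk at stopping time. *)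
Fixpoint insert_loop (C : nat -> U -> Prop) (ms : nat * nat -> nat)
  (s : seq (nat * nat)) (j : nat) {struct j} : seq (nat * nat) * nat :=
  match j with
  | (k.+1 as j').+1 =>
      let m := mchk C (take k.+2 s) in
      (* L'_{j-1} is at 0-indexed position k *)
      if ms (nth (0, 0) s k) < m then (s, m)
      else insert_loop C ms (swap_at s k) j'
  | _ => (s, mchk C (take j s))
  end.

(* the diagonal order: (0,1),(1,1),(0,2),(2,1),(1,2),(0,3),...;
   with 0-indexed languages: (n'-h, h) for n' = 0,1,..., h = 0..n'. *)
Definition diag_list (K : nat) : seq (nat * nat) :=
  flatten [seq [seq (n' - h, h) | h <- iota 0 n'.+1] | n' <- iota 0 K].

Definition diag (l : nat) : nat * nat := nth (0, 0) (diag_list l.+1) l.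

(* state after l rounds: the collection C'_l and the values m^star assigned so far *)
Fixpoint noisy_proc (C : nat -> U -> Prop) (l : nat)
  : seq (nat * nat) * (nat * nat -> nat) :=
  match l with
  | 0 => ([::], fun _ => 0)
  | l'.+1 =>
      let st := noisy_proc C l' in
      let e := diag l' in
      let res := insert_loop C st.2 (rcons st.1 e) (size st.1).+1 in
      (res.1, fun p => if p == e then res.2 else st.2 p)
  end.

Definition diag_index (n i : nat) : nat := ((n + i) * (n + i).+1) %/ 2 + i.

Definition mstar (C : nat -> U -> Prop) (n i : nat) : nat :=
  (noisy_proc C (diag_index n i).+1).2 (n, i).

End Defs.

From Pilot Require Import Defs.
From mathcomp Require Import all_boot zify boolp.
From Stdlib Require Import ClassicalEpsilon.

(* Take t_n(L_i) := m*_n(L_i) + 1.  The generator outputs an unseen string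
   lying in every language L_{n,i} consistent with the sample S (S is
   n-contained in L_i and |S| >= t_n(L_i)); by hypothesis only finitely many
   languages are consistent.  The Noisy Procedure keeps m* nondecreasing along
   its list and maintains that the m_chk of every prefix ending at an entry is
   at most the m* of that entry.  If the consistent languages had no common
   unseen string, S would witness m_chk >= |S| for the prefix ending at the
   last of them, so |S| <= m* < t <= |S|.
   For Pareto-optimality, when L_{n,i} is inserted, m*_n(L_i) = |T| for a
   sample T and a subcollection D of the entries up to L_{n,i}.  An algorithm
   whose times are at most |T| on all of D must output, on the sample T, a
   fresh string in all of D, and T could be enlarged, contradicting the
   maximality of m_chk.  So an algorithm beating t_n(L_i) is later than |T| on
   some other member of D, whose m* is smaller than |T| since it precedes
   L_{n,i} in the final order. *)

Set Implicit Arguments.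
Unset Strict Implicit.
Unset Printing Implicit Defensive.

Section SeqLemmas.
Variable T : eqType.

Lemma uniq_size_le_cover (ps : seq (pred T)) (S F : seq T) :
  uniq S -> (forall y, y \in S -> y \in F \/ has (fun p : pred T => p y) ps) ->
  size S <= size F + \sum_(p <- ps) count p S.
Proof.
elim: ps S => [|p ps IH] S uS cover.
  rewrite big_nil addn0; apply: uniq_leq_size => // y /cover.
  by case=> //; rewrite has_nil.
rewrite big_cons -(count_predC p S) addnCA leq_add2l.
have cover' y :
    y \in [seq z <- S | ~~ p z] -> y \in F \/ has (fun q : pred T => q y) ps.
  rewrite mem_filter => /andP [npy /cover [|]]; first by left.
  by rewrite /= (negbTE npy); right.
rewrite -size_filter; apply: leq_trans (IH _ (filter_uniq _ uS) cover') _.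
rewrite leq_add2l; apply: leq_sum => q _.
by rewrite count_filter; apply: sub_count => y /andP [].
Qed.

Lemma split_at_last_mem (D s : seq T) : D != [::] -> {subset D <= s} ->
  exists P e Q, [/\ s = P ++ e :: Q, e \in D & {subset D <= rcons P e}].
Proof.
move=> nD; elim/last_ind: s => [|s x IH] sub.
  by case: D nD sub => // d D _ /(_ d); rewrite in_cons eqxx => /(_ isT).
have [xD|xD] := boolP (x \in D).
  by exists s, x, [::]; rewrite cats1.
have [|P [e [Q [-> eD sD]]]] := IH.
  move=> y yD; move: (sub y yD); rewrite mem_rcons in_cons.
  by case/predU1P => [ey|//]; move: xD; rewrite -ey yD.
by exists P, e, (rcons Q x); rewrite rcons_cat.
Qed.

Lemma cat_cons_eq_cases (A B P Q : seq T) e x : A ++ e :: B = P ++ x :: Q ->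
  [\/ exists A2, A = P ++ x :: A2 /\ Q = A2 ++ e :: B,
      [/\ P = A, x = e & Q = B] |
      exists B1, P = A ++ e :: B1 /\ B = B1 ++ x :: Q].
Proof.
elim: A P => [|a A IH] [|p P] /= [] eq_hd eq_tl; subst.
- by constructor 2.
- by constructor 3; exists P.
- by constructor 1; exists A.
- case: (IH _ eq_tl) => [[A2 [-> ->]]|[-> -> ->]|[B1 [-> ->]]].
  + by constructor 1; exists A2.
  + by constructor 2.
  + by constructor 3; exists B1.
Qed.

Lemma pairwise_leq_last (x0 f : T) (ms : T -> nat) A :
  pairwise leq (map ms A) -> f \in A -> ms f <= ms (last x0 A).
Proof.
case/lastP: A => // A p; rewrite last_rcons -cats1 map_cat pairwise_cat.
case/and3P => /allrelP le_p _ _; rewrite mem_cat mem_seq1.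
case/orP => [fA|/eqP -> //].
by apply: le_p; [exact: map_f | rewrite mem_seq1].
Qed.

End SeqLemmas.

Lemma swap_at_cat (A B : seq (nat * nat)) x y :
  swap_at (A ++ x :: y :: B) (size A) = A ++ y :: x :: B.
Proof. by elim: A => //= a A; rewrite /swap_at /= => ->. Qed.

Definition tri n := n * n.+1 %/ 2.

Lemma triS n : tri n.+1 = tri n + n.+1.
Proof. rewrite /tri; lia. Qed.

Lemma leq_tri : {homo tri : m n / m <= n}.
Proof.
by apply: homo_leq => [//|y x z|n]; [exact: leq_trans | rewrite triS leq_addr].
Qed.

Lemma tri_ge n : n <= tri n.
Proof. by elim: n => // n IH; rewrite triS; lia. Qed.

Lemma diag_listS K :
  diag_list K.+1 = diag_list K ++ [seq (K - h, h) | h <- iota 0 K.+1].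
Proof.
rewrite /diag_list -[in LHS]addn1 iotaD map_cat flatten_cat.
by congr (_ ++ _); rewrite /= cats0 add0n.
Qed.

Lemma size_diag_list K : size (diag_list K) = tri K.
Proof.
by elim: K => // K IH; rewrite diag_listS size_cat IH size_map size_iota triS.
Qed.

Lemma nth_diag_list K n h : n < K -> h <= n ->
  nth (0, 0) (diag_list K) (tri n + h) = (n - h, h).
Proof.
elim: K => // K IH; rewrite ltnS leq_eqVlt => /predU1P [->|ltnK] le_hn;
  rewrite diag_listS nth_cat size_diag_list.
  by rewrite addKn (nth_map 0) ?size_iota ?ltnS // nth_iota ?ltnS // ltnNge leq_addr.
have : tri n.+1 <= tri K by exact: leq_tri.
rewrite triS => le_K; have -> : tri n + h < tri K by lia.
exact: IH.
Qed.

Lemma diag_of_index n i : diag (diag_index n i) = (n, i).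
Proof.
rewrite /diag /diag_index -/(tri (n + i)) nth_diag_list ?addnK ?leq_addl //.
by have := tri_ge (n + i); lia.
Qed.

Lemma diag_index_surj l : exists n i, diag_index n i = l.
Proof.
suff [n [h [le_hn ->]]] : exists n h, h <= n /\ l = tri n + h.
  by exists (n - h), h; rewrite /diag_index subnK.
elim: l => [|l [n [h [le_hn ->]]]]; first by exists 0, 0.
have [lt_hn|le_nh] := ltnP h n; first by exists n, h.+1; rewrite addnS.
by exists n.+1, 0; rewrite triS; lia.
Qed.

Lemma index_of_diag l : diag_index (diag l).1 (diag l).2 = l.
Proof. by have [n [i <-]] := diag_index_surj l; rewrite diag_of_index. Qed.

Lemma diag_inj : injective diag.
Proof. by move=> l1 l2 e; rewrite -(index_of_diag l1) e index_of_diag. Qed.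

Section NoisyProcedure.
Variables (U : countType) (C : nat -> U -> Prop).

(* Junk when the intersection over [D] is infinite. *)
Definition cover_size (D : seq (nat * nat)) : nat :=
  epsilon (inhabits 0) (fun n => exists F : seq U, size F = n /\
    forall y, (forall ab, ab \in D -> C ab.2 y) -> y \in F).

Lemma cover_sizeP D :
  (exists F : seq U, forall y, (forall ab, ab \in D -> C ab.2 y) -> y \in F) ->
  exists F : seq U, size F = cover_size D /\
    forall y, (forall ab, ab \in D -> C ab.2 y) -> y \in F.
Proof.
move=> [F cover]; apply: (epsilon_spec (inhabits 0) (fun n => exists F : seq U,
  size F = n /\ forall y, (forall ab, ab \in D -> C ab.2 y) -> y \in F)).
by exists (size F), F.
Qed.

(* Every [D] drawn from [pre] has the same intersection as the mask of [pre]
   selecting it, so finitely many cover sizes suffice. *)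
Definition chk_bound (pre : seq (nat * nat)) : nat :=
  \max_(m : (size pre).-tuple bool) cover_size (mask m pre) + \sum_(ab <- pre) ab.1.

Lemma chk_size_le_bound pre k : chk_size C pre k -> k <= chk_bound pre.
Proof.
case=> [->//|[T [D [uT <- [sub _] contained fin_cap]]]].
pose m := map_tuple (fun ab => ab \in D) (in_tuple pre).
have eq_mD : mask m pre =i D.
  by move=> ab; rewrite -filter_mask mem_filter andb_idr //; exact: sub.
have [F [size_F cover]] : exists F : seq U, size F = cover_size (mask m pre) /\
    forall y, (forall ab, ab \in mask m pre -> C ab.2 y) -> y \in F.
  apply: cover_sizeP; case: fin_cap => F cover; exists F => y inD.
  by apply: cover => ab; rewrite -eq_mD; exact: inD.
pose outside ab (y : U) := (ab \in D) && ~~ `[< C ab.2 y >].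
apply: leq_trans (uniq_size_le_cover (ps := map outside pre) (F := F) uT _) _.
  move=> y _; have [inD|] := pselect (forall ab, ab \in mask m pre -> C ab.2 y).
    by left; exact: cover.
  move/existsNP => [ab /not_implyP [abD notC]]; right; apply/hasP.
  exists (outside ab); first by apply: map_f; apply: sub; rewrite -eq_mD.
  by rewrite /outside -eq_mD abD; apply/asboolPn.
apply: leq_add; first by rewrite size_F (leq_bigmax m).
rewrite big_map big_seq [leqRHS]big_seq; apply: leq_sum => ab _.
rewrite /outside; have [abD|_] := boolP (ab \in D); last by rewrite count_pred0.
rewrite -size_filter; apply: contained => //; first exact: filter_uniq.
  by move=> y; rewrite mem_filter => /andP [].
by move=> y; rewrite mem_filter => /andP [/asboolPn].
Qed.

Lemma mchk_spec pre :
  chk_size C pre (mchk C pre) /\ forall k, chk_size C pre k -> k <= mchk C pre.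
Proof.
apply: (epsilon_spec (inhabits 0)
  (fun m => chk_size C pre m /\ forall k, chk_size C pre k -> k <= m)).
have exP : exists k, `[< chk_size C pre k >] by exists 0; apply/asboolP; left.
have ubP k : `[< chk_size C pre k >] -> k <= chk_bound pre.
  by move/asboolP; exact: chk_size_le_bound.
case: (ex_maxnP exP ubP) => m /asboolP chk_m max_m.
by exists m; split => // k /asboolP; exact: max_m.
Qed.

Lemma chk_size_subset pre pre' k :
  {subset pre <= pre'} -> last (0, 0) pre = last (0, 0) pre' ->
  chk_size C pre k -> chk_size C pre' k.
Proof.
move=> sub_pre eq_last [->|[T [D [uT sT [sub lD] contained fin_cap]]]]; first by left.
by right; exists T, D; split => //; split; [move=> ab /sub /sub_pre | rewrite -eq_last].
Qed.

Lemma mchk_subset pre pre' :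
  {subset pre <= pre'} -> last (0, 0) pre = last (0, 0) pre' ->
  mchk C pre <= mchk C pre'.
Proof.
move=> sub_pre eq_last; apply: (mchk_spec pre').2.
exact: chk_size_subset sub_pre eq_last (mchk_spec pre).1.
Qed.

(* A subcollection either uses the entry [e] moved behind [x] or avoids it. *)
Lemma chk_size_split A B e x k :
  chk_size C (rcons (A ++ e :: B) x) k ->
  chk_size C (A ++ B ++ [:: x; e]) k \/ chk_size C (rcons (A ++ B) x) k.
Proof.
case=> [->|[T [D [uT sT [sub lD] contained fin_cap]]]]; first by left; left.
rewrite last_rcons in lD.
have [eD|eD] := boolP (e \in D); [left | right]; right; exists T, D; split => //.
  split; last by rewrite !last_cat.
  move=> ab /sub; rewrite !(mem_rcons, mem_cat, in_cons) in_nil.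
  by case/or4P => ->; rewrite ?orbT.
split; last by rewrite last_rcons.
move=> ab abD; have ne_ab : ab != e by apply: contraNneq eD => <-.
move: (sub ab abD); rewrite !(mem_rcons, mem_cat, in_cons) (negbTE ne_ab).
by case/or4P => [->|->|//|->]; rewrite ?orbT.
Qed.

Lemma insert_loop_step ms s k :
  insert_loop C ms s k.+2 =
  if ms (nth (0, 0) s k) < mchk C (take k.+2 s) then (s, mchk C (take k.+2 s))
  else insert_loop C ms (swap_at s k) k.+1.
Proof. by []. Qed.

(* The stopping test (B) failed at every entry [b] that [e] was swapped past. *)
Definition swapped_past (ms : nat * nat -> nat) A e B : Prop :=
  forall B1 b B2, B = B1 ++ b :: B2 -> mchk C (A ++ B1 ++ [:: b; e]) <= ms b.

Lemma insert_loop_stops ms e A B : swapped_past ms A e B ->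
  exists A' B', [/\ insert_loop C ms (A ++ e :: B) (size A).+1
                      = (A' ++ e :: B', mchk C (rcons A' e)),
    A' ++ B' = A ++ B,
    A' = [::] \/ ms (last (0, 0) A') < mchk C (rcons A' e) &
    swapped_past ms A' e B'].
Proof.
elim/last_ind: A B => [|A p IH] B passed.
  by exists [::], B; split => //=; [rewrite take0 | left].
rewrite size_rcons cat_rcons insert_loop_step nth_cat ltnn subnn.
have ->: take (size A).+2 (A ++ p :: e :: B) = A ++ [:: p; e].
  by rewrite -[p :: _]/([:: p; e] ++ B) catA take_size_cat // size_cat addn2.
case: ifP => [stop|pass].
  have rcons2 : rcons (rcons A p) e = A ++ [:: p; e] by rewrite -!cats1 -catA.
  exists (rcons A p), B; split => //; first by rewrite cat_rcons rcons2.
  by right; rewrite last_rcons rcons2.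
rewrite swap_at_cat; have [|A' [B' [-> eAB lt_last passed']]] := IH (p :: B).
  case=> [|b1 B1] b B2 /= [<-]; first by rewrite leqNgt pass.
  by move=> eB; rewrite -cat_rcons; exact: passed eB.
by exists A', B'; rewrite eAB cat_rcons.
Qed.

Lemma insert_loop_round ms s e : pairwise leq (map ms s) ->
  exists A B, [/\ insert_loop C ms (rcons s e) (size s).+1
                    = (A ++ e :: B, mchk C (rcons A e)),
    A ++ B = s,
    (forall f, f \in A -> ms f < mchk C (rcons A e)) &
    swapped_past ms A e B].
Proof.
move=> sorted_s; have [] := @insert_loop_stops ms e s [::].
  by move=> [|? ?] ? ?.
move=> A [B [loop eAB stop passed]]; rewrite cats0 in eAB.
exists A, B; rewrite -cats1; split => // f fA.
case: stop => [A0|lt_last]; first by rewrite A0 in fA.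
apply: leq_ltn_trans lt_last; apply: pairwise_leq_last fA.
by move: sorted_s; rewrite -eAB map_cat pairwise_cat => /and3P [].
Qed.

Definition update (ms : nat * nat -> nat) e m : nat * nat -> nat :=
  fun p => if p == e then m else ms p.

Definition chk_bounded (ms : nat * nat -> nat) s : Prop :=
  forall P x Q, s = P ++ x :: Q -> mchk C (rcons P x) <= ms x.

Section Round.
Variables (ms : nat * nat -> nat) (A B : seq (nat * nat)) (e : nat * nat).
Hypotheses (e_new : e \notin A ++ B) (passed : swapped_past ms A e B).
Let m := mchk C (rcons A e).

Lemma update_old x : x \in A ++ B -> update ms e m x = ms x.
Proof. by rewrite /update; case: eqP => // -> eAB; move: e_new; rewrite eAB. Qed.

Lemma update_round_sorted :
  pairwise leq (map ms (A ++ B)) -> (forall f, f \in A -> ms f < m) ->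
  pairwise leq (map (update ms e m) (A ++ e :: B)).
Proof.
move=> + lt_A; rewrite !map_cat !pairwise_cat => /and3P [le_AB sorted_A sorted_B].
have /eq_in_map -> : {in A, update ms e m =1 ms}.
  by move=> x xA; apply: update_old; rewrite mem_cat xA.
rewrite map_cons pairwise_cons; have /eq_in_map -> : {in B, update ms e m =1 ms}.
  by move=> x xB; apply: update_old; rewrite mem_cat xB orbT.
rewrite /update eqxx allrel_consr le_AB sorted_A sorted_B !andbT; apply/andP; split.
  by apply/allP => _ /mapP [f fA ->]; exact: ltnW (lt_A f fA).
apply/allP => _ /mapP [b bB ->]; case/splitPr: bB passed => B1 B2 /(_ B1 b B2 erefl).
apply: leq_trans; apply: mchk_subset; last by rewrite last_rcons !last_cat.
move=> y; rewrite mem_rcons in_cons !mem_cat !in_cons.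
by case/predU1P => [->|->]; rewrite ?eqxx ?orbT.
Qed.

Lemma update_round_bounded :
  chk_bounded ms (A ++ B) -> chk_bounded (update ms e m) (A ++ e :: B).
Proof.
move=> bounded P x Q /cat_cons_eq_cases [[A2 [eA eQ]]|[eP -> eQ]|[B1 [eP eB]]].
- rewrite update_old; last by rewrite eA !(mem_cat, in_cons) eqxx orbT.
  by apply: bounded; rewrite eA -catA.
- by rewrite /update eqxx eP.
- rewrite update_old; last by rewrite eB !(mem_cat, in_cons) eqxx !orbT.
  rewrite eP; case/chk_size_split: (mchk_spec (rcons (A ++ e :: B1) x)).1.
    by move=> /(mchk_spec _).2 /leq_trans; apply; exact: passed eB.
  move=> /(mchk_spec _).2 /leq_trans; apply; apply: (bounded _ _ Q).
  by rewrite eB catA.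
Qed.

End Round.

Lemma noisy_procS l s m :
  insert_loop C (noisy_proc C l).2 (rcons (noisy_proc C l).1 (diag l))
    (size (noisy_proc C l).1).+1 = (s, m) ->
  noisy_proc C l.+1 = (s, update (noisy_proc C l).2 (diag l) m).
Proof.
move=> loop; change (noisy_proc C l.+1) with
  (let res := insert_loop C (noisy_proc C l).2 (rcons (noisy_proc C l).1 (diag l))
                (size (noisy_proc C l).1).+1 in
   (res.1, update (noisy_proc C l).2 (diag l) res.2)).
by rewrite loop.
Qed.

Lemma noisy_proc_inv l :
  [/\ pairwise leq (map (noisy_proc C l).2 (noisy_proc C l).1),
      chk_bounded (noisy_proc C l).2 (noisy_proc C l).1 &
      forall x, x \in (noisy_proc C l).1 <-> exists2 l', l' < l & diag l' = x].
Proof.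
elim: l => [|l [sorted bounded mem]].
  by split=> // [[|? ?] ? ? //|x]; split=> // [[]].
have e_new : diag l \notin (noisy_proc C l).1.
  by apply/negP => /mem [l' lt_l /diag_inj eq_l]; rewrite eq_l ltnn in lt_l.
have [A [B [loop eAB lt_A passed]]] := insert_loop_round (diag l) sorted.
rewrite (noisy_procS loop) /=; rewrite -eAB in e_new sorted bounded mem.
split; first exact: update_round_sorted.
  exact: update_round_bounded.
move=> x; rewrite mem_cat in_cons orbCA -mem_cat; split.
  case/predU1P => [->|/mem [l' lt_l <-]]; first by exists l.
  by exists l'; first exact: ltnW.
case=> l'; rewrite ltnS leq_eqVlt => /predU1P [->|lt_l] <-; first by rewrite eqxx.
by apply/orP; right; apply/mem; exists l'.
Qed.

Lemma noisy_proc_mstar l x :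
  x \in (noisy_proc C l).1 -> (noisy_proc C l).2 x = mstar C x.1 x.2.
Proof.
have [_ _ mem] := noisy_proc_inv l; case/mem => l' lt_l <-.
rewrite /mstar index_of_diag -surjective_pairing.
elim: l lt_l {mem} => // l IH; rewrite ltnS leq_eqVlt => /predU1P [-> //|lt_l].
have [sorted _ _] := noisy_proc_inv l.
have [A [B [loop _ _ _]]] := insert_loop_round (diag l) sorted.
rewrite (noisy_procS loop) /= /update; case: eqP => [/diag_inj eq_l|_]; last exact: IH.
by rewrite eq_l ltnn in lt_l.
Qed.

(* The entry of [D] placed last by the procedure bounds every witness for [D]. *)
Lemma finite_cap_le_mstar (T : seq U) (D : seq (nat * nat)) :
  uniq T -> D != [::] -> (forall ab, ab \in D -> a_contained T (C ab.2) ab.1) ->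
  (exists F : seq U, forall y, (forall ab, ab \in D -> C ab.2 y) -> y \in F) ->
  exists2 e, e \in D & size T <= mstar C e.1 e.2.
Proof.
move=> uT nD contained fin_cap.
pose l := \sum_(ab <- D) (diag_index ab.1 ab.2).+1.
have [_ bounded mem] := noisy_proc_inv l.
have sub : {subset D <= (noisy_proc C l).1}.
  move=> ab abD; apply/mem; exists (diag_index ab.1 ab.2).
    by rewrite /l (big_rem ab abD) leq_addr.
  by rewrite diag_of_index -surjective_pairing.
have [P [e [Q [eS eD sD]]]] := split_at_last_mem nD sub.
exists e => //; rewrite -(noisy_proc_mstar (l := l)); last first.
  by rewrite eS mem_cat mem_head orbT.
apply: leq_trans (bounded P e Q eS); apply: (mchk_spec _).2.
by right; exists T, D; rewrite last_rcons.
Qed.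

Lemma mstar_round n i : exists A,
  mstar C n i = mchk C (rcons A (n, i)) /\
  forall f, f \in A -> mstar C f.1 f.2 < mstar C n i.
Proof.
pose l := diag_index n i; have de : diag l = (n, i) := diag_of_index n i.
have [sorted _ _] := noisy_proc_inv l.
have [A [B [loop eAB lt_A _]]] := insert_loop_round (diag l) sorted.
have eM : mstar C n i = mchk C (rcons A (n, i)).
  by rewrite /mstar -/l (noisy_procS loop) /= /update de eqxx.
exists A; split => // f fA; rewrite eM -de -(noisy_proc_mstar (l := l)).
  exact: lt_A.
by rewrite -eAB mem_cat fA.
Qed.

Lemma mstar_witness n i : 0 < mstar C n i ->
  exists (T : seq U) (D : seq (nat * nat)), [/\ uniq T /\ size T = mstar C n i,
    (n, i) \in D /\
      {in D, forall ab, ab != (n, i) -> mstar C ab.1 ab.2 < mstar C n i},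
    (forall ab, ab \in D -> a_contained T (C ab.2) ab.1) &
    forall y, y \notin T -> exists2 ab, ab \in D & ~ C ab.2 y].
Proof.
move=> M_pos; have [A [eM lt_A]] := mstar_round n i.
have [chk max_chk] := mchk_spec (rcons A (n, i)); rewrite -eM in chk max_chk.
case: chk => [M0|[T [D [uT sT [sub lD] contained fin_cap]]]].
  by rewrite M0 in M_pos.
rewrite last_rcons in lD; exists T, D; split => //.
  split=> // ab abD ne; apply: lt_A.
  by move: (sub ab abD); rewrite mem_rcons in_cons (negbTE ne).
move=> y yT; apply: contrapT => none.
have inD ab : ab \in D -> C ab.2 y.
  by move=> abD; apply: contrapT => notC; apply: none; exists ab.
suff: (size T).+1 <= mstar C n i by rewrite sT ltnn.
apply: (max_chk (size (y :: T))); right; exists (y :: T), D; split => //=.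
- by rewrite yT.
- by rewrite last_rcons.
move=> ab abD s us sub_s notC; apply: (contained ab abD s us) => // z zs.
have /predU1P [ez|//] := sub_s z zs.
by case: (notC z zs); rewrite ez; exact: inD.
Qed.

End NoisyProcedure.

Section Enumerations.
Variable U : countType.

Lemma enumeration_prefix_contained (L : U -> Prop) n x t :
  enumeration L n x -> a_contained (undup (Defs.prefix x t)) L n.
Proof.
move=> [_ noise] s us sub_s notL; set p := Defs.prefix x t.
have x_index y : y \in s -> x (index y p) = y.
  move=> /sub_s; rewrite mem_undup => yp.
  rewrite -[RHS](nth_index (x 0) yp) /p /Defs.prefix nth_mkseq //.
  by rewrite -index_mem size_mkseq in yp.
rewrite -(size_map (index^~ p)); apply: noise.
  rewrite map_inj_in_uniq // => y1 y2 y1s y2s eq_index.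
  by rewrite -(x_index y1 y1s) eq_index x_index.
by move=> _ /mapP [y ys ->]; rewrite x_index //; exact: notL.
Qed.

(* List [T] first, then every string of [L] (through the enumeration of the
   countable type [U]); only strings of [T] can lie outside [L]. *)
Lemma enumeration_with_prefix (L : U -> Prop) a (T : seq U) :
  infinite_lang L -> uniq T -> a_contained T L a ->
  exists x, enumeration L a x /\ Defs.prefix x (size T) = T.
Proof.
move=> infL uT contained; have [y0 [Ly0 _]] := infL [::].
pose enumL k := if @unpickle U k is Some y then (if `[< L y >] then y else y0) else y0.
have L_enumL k : L (enumL k).
  by rewrite /enumL; case: unpickle => // y; case: asboolP.
pose x k := if k < size T then nth y0 T k else enumL (k - size T).
exists x; split; [split|].
- move=> y Ly; exists (size T + pickle y).
  by rewrite /x ltnNge leq_addr /= addKn /enumL pickleK; case: asboolP.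
- move=> s us notL.
  have lt_T k : k \in s -> k < size T.
    move=> ks; rewrite ltnNge; apply/negP => le_Tk; apply: (notL k ks).
    by rewrite /x ltnNge le_Tk /=.
  rewrite -(size_map (nth y0 T)); apply: contained.
  + rewrite map_inj_in_uniq // => k1 k2 k1s k2s /eqP.
    by rewrite nth_uniq ?lt_T // => /eqP.
  + by move=> _ /mapP [k ks ->]; exact: mem_nth (lt_T k ks).
  + by move=> _ /mapP [k ks ->]; have := notL k ks; rewrite /x lt_T.
- apply: (@eq_from_nth _ y0); rewrite size_mkseq // => k lt_kT.
  by rewrite nth_mkseq // /x lt_kT.
Qed.

Lemma works_at_sample (C : nat -> U -> Prop) (G : algorithm U) n i k (T : seq U) :
  infinite_lang (C i) -> works_at C G n i k ->
  uniq T -> a_contained T (C i) n -> 0 < size T -> k <= size T ->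
  C i (G T) /\ G T \notin T.
Proof.
move=> infL works uT contained T_pos le_kT.
have [x [enum_x eT]] := enumeration_with_prefix infL uT contained.
by have := works x enum_x (size T) T_pos; rewrite eT undup_id //; apply.
Qed.

Lemma least_time_exists (C : nat -> U -> Prop) (G : algorithm U) n i k :
  works_at C G n i k -> exists m, least_time C G n i m.
Proof.
move=> works.
have exP : exists k, `[< works_at C G n i k >] by exists k; apply/asboolP.
case: (ex_minnP exP) => m /asboolP works_m min_m.
by exists m; split => // k' /asboolP; exact: min_m.
Qed.

End Enumerations.

Section Algorithm.
Variables (U : countType) (C : nat -> U -> Prop).

(* [t_n(L_i) = m*_n(L_i) + 1], except that thresholds [0] and [1] are
   equivalent (the sample is never empty) and the least one must be used. *)
Definition gen_time n i : nat := if mstar C n i == 0 then 0 else (mstar C n i).+1.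

Lemma mstar_le_gen_time n i : mstar C n i <= gen_time n i.
Proof. by rewrite /gen_time; case: eqP => [->|]. Qed.

Lemma gen_time_le_mstarS n i : gen_time n i <= (mstar C n i).+1.
Proof. by rewrite /gen_time; case: eqP. Qed.

Lemma mstar_lt_gen_time_le n i N :
  0 < N -> gen_time n i <= N -> mstar C n i < N.
Proof. by rewrite /gen_time; case: eqP => [->//|]. Qed.

Lemma gen_time_gt m n i : m < gen_time n i -> 0 < mstar C n i /\ m <= mstar C n i.
Proof. by rewrite /gen_time lt0n; case: eqP. Qed.

Definition consistent (p : seq U) n i : Prop :=
  a_contained (undup p) (C i) n /\ gen_time n i <= size (undup p).

Variable x0 : U.

Definition generator : algorithm U := fun p =>
  epsilon (inhabits x0) (fun y => y \notin p /\ forall n i, consistent p n i -> C i y).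

Hypothesis finite_levels : forall t : nat, exists F : seq (nat * nat),
  forall n j, mstar C n j + 1 <= t -> (n, j) \in F.

Lemma consistent_finite p :
  exists F : seq (nat * nat), forall n i, consistent p n i -> (n, i) \in F.
Proof.
have [F inF] := finite_levels (size (undup p)).+1.
exists F => n i [_ le_time]; apply: inF; rewrite addn1 ltnS.
exact: leq_trans (mstar_le_gen_time n i) le_time.
Qed.

Lemma generatorP p :
  (exists y, y \notin p /\ forall n i, consistent p n i -> C i y) ->
  generator p \notin p /\ forall n i, consistent p n i -> C i (generator p).
Proof. exact: epsilon_spec. Qed.

Lemma fresh_in_consistent p n i : consistent p n i -> 0 < size p ->
  exists y, y \notin p /\ forall n' j, consistent p n' j -> C j y.
Proof.
move=> cons_ni p_pos; apply: contrapT => no_fresh.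
have [F inF] := consistent_finite p.
pose D := [seq ab <- F | `[< consistent p ab.1 ab.2 >]].
have cons_D ab : ab \in D -> consistent p ab.1 ab.2.
  by rewrite mem_filter => /andP [/asboolP].
have niD : (n, i) \in D by rewrite mem_filter inF // andbT; apply/asboolP.
have nD : D != [::] by apply/eqP => D0; rewrite D0 in niD.
have cap_in_p :
    exists F : seq U, forall y, (forall ab, ab \in D -> C ab.2 y) -> y \in F.
  exists (undup p) => y inD; apply: contrapT => yp; apply: no_fresh.
  exists y; split; first by rewrite -mem_undup; apply/negP.
  move=> n' j cons_j; apply: (inD (n', j)).
  by rewrite mem_filter inF // andbT; apply/asboolP.
have [e eD] := finite_cap_le_mstar (undup_uniq p) nD
  (fun ab abD => (cons_D ab abD).1) cap_in_p.
have [_ le_time] := cons_D e eD.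
have undup_pos : 0 < size (undup p) by rewrite -has_predT has_undup has_predT.
by rewrite leqNgt mstar_lt_gen_time_le.
Qed.

Lemma generator_generates : generates_with C generator gen_time.
Proof.
move=> n i x enum_x t t_pos le_time; set p := Defs.prefix x t.
have cons_ni : consistent p n i by split; first exact: enumeration_prefix_contained.
have p_pos : 0 < size p by rewrite size_mkseq.
have [G_fresh G_in] := generatorP (fresh_in_consistent cons_ni p_pos).
by split; first exact: G_in cons_ni.
Qed.

Hypothesis C_langs : forall i, infinite_lang (C i).

Lemma gen_time_pareto_optimal : pareto_optimal C gen_time.
Proof.
move=> G [tt gen] n i m [works_m _] lt_m.
have [M_pos le_mM] := gen_time_gt lt_m.
have [T [D [[uT sT] [niD lt_D] contained none]]] := mstar_witness M_pos.
have [f fD [m' [works_m' least_m'] lt_Mm']] : exists2 f, f \in D &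
    exists2 m', least_time C G f.1 f.2 m' & mstar C n i < m'.
  apply: contrapT => late.
  have gen_T ab : ab \in D -> C ab.2 (G T) /\ G T \notin T.
    move=> abD; have [m' [works_m' least_m']] := least_time_exists (gen ab.1 ab.2).
    apply: (works_at_sample (C_langs _) works_m' uT (contained ab abD)); rewrite sT //.
    by rewrite leqNgt; apply/negP => lt_Mm'; apply: late; exists ab; last exists m'.
  have [ab abD []] := none _ (gen_T _ niD).2; exact: (gen_T ab abD).1.
have ne_f : f != (n, i).
  apply/eqP => ef; move: (least_m' m); rewrite ef => /(_ works_m) le_m'm.
  by have := leq_trans le_m'm le_mM; rewrite leqNgt lt_Mm'.
exists f.1, f.2, m'; rewrite -surjective_pairing; split; first exact/eqP.
split => //; apply: leq_ltn_trans lt_Mm'.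
exact: leq_trans (gen_time_le_mstarS _ _) (lt_D f fD ne_f).
Qed.

End Algorithm.

Theorem mainTheorem7 (U : countType)
  (U_infinite : forall s : seq U, exists x : U, x \notin s)
  (C : nat -> U -> Prop)
  (C_langs : forall i, infinite_lang (C i))
  (Hfin : forall t : nat, exists F : seq (nat * nat),
      forall n' j, mstar C n' j + 1 <= t -> (n', j) \in F) :
  exists (G : algorithm U) (tt : nat -> nat -> nat),
    generates_with C G tt /\ pareto_optimal C tt.
Proof.
have [x0 _] := U_infinite [::].
exists (generator C x0), (gen_time C); split.
  exact: generator_generates Hfin.
exact: gen_time_pareto_optimal C_langs.
Qed.
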